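(* Let $S$ be a ring, let $n>1$ be an integer and let $R,B_1,\ldots,B_n$ be subrings of $S$. Assume that every $B_i$ is integrally closed in $S$ except at most two of them. If $R\subseteq B_1\cup\cdots\cup B_n$, then $R\subseteq B_i$ for some $i\in\{1,\ldots,n\}$.
   Context: All rings are commutative with identity; subrings share the identity of $S$. A subring $B$ of $S$ is integrally closed in $S$ if every element of $S$ integral over $B$ lies in $B$. *)

From HB Require Import structures.
From mathcomp Require Import all_boot all_order all_algebra.
Set Implicit Arguments. Unset Strict Implicit. Unset Printing Implicit Defensive.
Import GRing.Theory.
Local Open Scope ring_scope.

Definition is_subring (S : comNzRingType) (B : {pred S}) : Prop := subring_closed B.

Definition integral_over (S : comNzRingType) (B : {pred S}) (x : S) : Prop :=
  exists p : {poly S}, [/\ p \is monic, p \is a polyOver B & root p x].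

Definition integrally_closed_in (S : comNzRingType) (B : {pred S}) : Prop :=
  forall x : S, integral_over B x -> x \in B.

(* Pass to an irredundant subcover: each member B_i of it owns an element of R that
   lies in no other member. If two members remained, choose them, B_i1 and B_i2, so
   that all other members are integrally closed, and let a, b be their private
   elements. The elements a^m + b (shifted by a if some power of a lies in B_i2)
   lie in R but in neither B_i1 nor B_i2, and two of them never share an integrally
   closed member: their difference a^m - a^l would make a integral over it, forcing
   a into it. Since there are more such elements than members, this is impossible. *)

From HB Require Import structures.
From mathcomp Require Import all_boot all_order all_algebra ring.
From Stdlib Require Import Classical.
Set Implicit Arguments. Unset Strict Implicit. Unset Printing Implicit Defensive.
Import GRing.Theory.
Local Open Scope ring_scope.

Definition subring_pred (S : comNzRingType) (B : {pred S}) (subB : is_subring B) :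
  subringClosed S :=
  HB.pack_for (subringClosed S) B (GRing.isSubringClosed.Build S B subB).

Section IntegrallyClosed.
Variables (S : comNzRingType) (C : subringClosed S).

Lemma integrally_closed_exprB (a : S) (l m : nat) : integrally_closed_in C ->
  l != m -> a ^+ m - a ^+ l \in C -> a \in C.
Proof.
move=> closedC; wlog lt_lm : l m / (l < m)%N.
  move=> wlog_lt; case: (ltngtP l m) => // [lt_lm|lt_ml] _.
    by apply: wlog_lt; rewrite // ltn_eqF.
  by rewrite -rpredN opprB; apply: wlog_lt; rewrite // ltn_eqF.
move=> _ amlC.
apply: closedC; exists ('X^m - ('X^l + (a ^+ m - a ^+ l)%:P)); split.
- apply/monicP; rewrite lead_coefDl ?lead_coefXn // size_polyN size_polyXn ltnS.
  by apply: leq_trans (size_polyD _ _) _; rewrite geq_max size_polyXn lt_lm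
    (leq_trans (size_polyC_leq1 _)) // (leq_trans _ lt_lm).
- by rewrite rpredB ?rpredD ?polyOverXn ?polyOverC.
- rewrite rootE hornerD hornerN hornerD !hornerXn hornerC.
  by rewrite [a ^+ l + _]addrC subrK subrr.
Qed.

Lemma exists_powers_notin (a : S) : a \notin C ->
  exists (k : nat) (e : bool),
    (0 < k)%N /\ forall t, a ^+ (k * t.+1) + a *+ e \notin C.
Proof.
move=> aC; have [[k [k_gt0 akC]]|no_power] :=
  classic (exists k, (0 < k)%N /\ a ^+ k \in C).
  exists k, true; split=> // t; rewrite mulr1n rpredDl // exprM.
  exact: rpredX.
exists 1%N, false; split=> // t; rewrite mulr0n addr0 mul1n.
by apply/negP=> atC; apply: no_power; exists t.+1.
Qed.

End IntegrallyClosed.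

Section Covers.
Variables (T : Type) (I : finType) (R : {pred T}) (B : I -> {pred T}).

Definition covered_by (F : {set I}) :=
  forall x, x \in R -> exists2 i, i \in F & x \in B i.

Definition irredundant (F : {set I}) :=
  forall i, i \in F -> exists2 u, u \in R & forall k, k \in F -> (u \in B k) = (k == i).

Lemma exists_irredundant_cover F :
  covered_by F -> exists2 F', covered_by F' & irredundant F'.
Proof.
elim: {F}_.+1 {-2}F (ltnSn #|F|) => // m IH F ltFm covF.
have [[i iF covFi]|redundant] := classic (exists2 i, i \in F & covered_by (F :\ i)).
  by apply: (IH (F :\ i)) covFi; rewrite (cardsD1 i F) iF in ltFm.
exists F => // i iF; apply: NNPP => no_private; apply: redundant; exists i => // x xR.
apply: NNPP => x_notin; apply: no_private; exists x => // k kF.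
have x_only_in_i j : j \in F -> x \in B j -> j = i.
  move=> jF xj; apply/eqP; apply: contraT => ji.
  by case: x_notin; exists j; rewrite // !inE ji.
have [j jF xj] := covF x xR; have ji := x_only_in_i j jF xj; subst j.
by apply/idP/eqP => [/(x_only_in_i _ kF)|->].
Qed.

Lemma covered_by_card_le1 F x0 : x0 \in R -> covered_by F -> (#|F| <= 1)%N ->
  exists i, {subset R <= B i}.
Proof.
move=> x0R covF /card_le1_eqP F_single; have [i iF _] := covF x0 x0R.
by exists i => x xR; have [j jF xj] := covF x xR; rewrite (F_single j i).
Qed.

End Covers.

Lemma exists_preferring (I : finType) (A E : {set I}) x : x \in A ->
  exists2 i, i \in A & forall k, k \in A -> k \in E -> i \in E.
Proof.
move=> xA; have [i /setIP[iA iE]|noAE] := pickP [pred i | i \in A :&: E].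
  by exists i.
by exists x => // k kA kE; move: (noAE k); rewrite /= inE kA kE.
Qed.

Lemma exists_pair_avoiding (I : finType) (E F : {set I}) :
  (#|E| <= 2)%N -> (1 < #|F|)%N ->
  exists i1 i2, [/\ i1 \in F, i2 \in F, i1 != i2 &
                    forall k, k \in F -> k != i1 -> k != i2 -> k \notin E].
Proof.
move=> E_le2 /card_gt1P[x [y [xF yF xy]]].
have [i1 i1F i1_pref] := exists_preferring E xF.
have [z zF z_i1] : exists2 z, z \in F & z != i1.
  by case: (eqVneq x i1) => [<-|]; [exists y; rewrite // eq_sym | exists x].
have zF' : z \in F :\ i1 by rewrite !inE z_i1.
have [i2 /setD1P[i2_i1 i2F] i2_pref] := exists_preferring E zF'.
exists i1, i2; split; rewrite 1?eq_sym // => k kF k_i1 k_i2.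
apply/negP=> kE; move: E_le2; rewrite leqNgt => /negP; apply; apply/card_gt2P.
exists i1, i2, k; rewrite (i1_pref k) ?(i2_pref k) ?inE ?k_i1 //.
by rewrite kE (eq_sym i1) i2_i1 (eq_sym i2) k_i2.
Qed.

Section IrredundantCover.
Variables (S : comNzRingType) (I : finType).
Variables (R : subringClosed S) (B : I -> subringClosed S).

Lemma irredundant_cover_two_nonclosed F i1 i2 :
  covered_by R B F -> irredundant R B F -> i1 \in F -> i2 \in F -> i1 != i2 ->
  (forall k, k \in F -> k != i1 -> k != i2 -> integrally_closed_in (B k)) -> False.
Proof.
move=> covF irrF i1F i2F i12 closedF.
have [a aR a_priv] := irrF i1 i1F; have [b bR b_priv] := irrF i2 i2F.
have ai1 : a \in B i1 by rewrite a_priv ?eqxx.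
have ai2 : a \notin B i2 by rewrite a_priv // eq_sym.
have bi1 : b \notin B i1 by rewrite b_priv.
have bi2 : b \in B i2 by rewrite b_priv ?eqxx.
have [k [e [k_gt0 power_notin]]] := exists_powers_notin ai2.
pose d (t : I) := (k * (enum_rank t).+1)%N.
pose w t := a ^+ d t + a *+ e + b.
have wR t : w t \in R by rewrite !rpredD ?rpredMn ?rpredX.
have wi1 t : w t \notin B i1 by rewrite rpredDl ?rpredD ?rpredMn ?rpredX.
have wi2 t : w t \notin B i2 by rewrite rpredDr //; apply: power_notin.
have [g gF wg] := fin_all_exists2 (fun t => covF _ (wR t)).
have g_i1 t : g t != i1 by apply: contraNneq (wi1 t) => <-.
have g_i2 t : g t != i2 by apply: contraNneq (wi2 t) => <-.
have g_inj : injective g.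
  move=> t s gts; apply/eqP; apply: contraT => ts.
  have d_ne : d s != d t.
    rewrite eqn_mul2l negb_or -lt0n k_gt0 eqSS.
    by rewrite (inj_eq val_inj) (inj_eq enum_rank_inj) eq_sym.
  have wB : w t - w s = a ^+ d t - a ^+ d s by rewrite /w; ring.
  have dB : a ^+ d t - a ^+ d s \in B (g t) by rewrite -wB rpredB ?wg // gts.
  have := integrally_closed_exprB (closedF _ (gF t) (g_i1 t) (g_i2 t)) d_ne dB.
  by rewrite a_priv ?gF // (negbTE (g_i1 t)).
by have /codomP[t /esym/eqP] := injF_onto g_inj i1; rewrite (negbTE (g_i1 t)).
Qed.

End IrredundantCover.

Theorem mainTheorem2 (S : comNzRingType) (n : nat) (R : {pred S})
    (B : 'I_n -> {pred S}) :
  (1 < n)%N ->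
  is_subring R ->
  (forall i, is_subring (B i)) ->
  (exists E : {set 'I_n}, (#|E| <= 2)%N /\
     forall i, i \notin E -> integrally_closed_in (B i)) ->
  (forall x, x \in R -> exists i, x \in B i) ->
  exists i, {subset R <= B i}.
Proof.
move=> _ subR subB [E [E_le2 closedB]] covB.
pose Rc := subring_pred subR; pose Bc i := subring_pred (subB i).
have covT : covered_by Rc Bc setT by move=> x /covB[i xi]; exists i.
have [F covF irrF] := exists_irredundant_cover covT.
apply: (covered_by_card_le1 (rpred1 Rc) covF); rewrite leqNgt.
apply/negP=> /(exists_pair_avoiding E_le2)[i1 [i2 [i1F i2F i12 F_closed]]].
apply: (irredundant_cover_two_nonclosed covF irrF i1F i2F i12) => k kF k1 k2.
exact: closedB (F_closed k kF k1 k2).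
Qed.
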